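(* Let $\mathcal{N}(\mu^\star,\Sigma)$ and $\mathcal{N}(\mu,\Sigma)$ be two $d$-dimensional Gaussian distributions with the same covariance $\Sigma$, such that $e_i^T\Sigma e_i\le Q$ and $|\mu^\star_i|=1$ for all $i\in[d]$. Then there is an absolute constant $c\in(0,1]$ such that for every $i\in[d]$, \[\Big|\Pr_{x\sim\mathcal{N}(\mu^\star,\Sigma)}[-1\le x_i\le1]-\Pr_{x\sim\mathcal{N}(\mu,\Sigma)}[-1\le x_i\le 1]\Big|\ge c\cdot\frac{\min(1,(1-|\mu_i|)^2)}{Q^4}.\]
   Context: $e_i$ is the $i$-th standard basis vector; $\mathcal{N}(\mu,\Sigma)$ is the Gaussian with mean $\mu$ and covariance $\Sigma$. *)

From HB Require Import structures.
From mathcomp Require Import all_boot all_order all_algebra.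
From mathcomp Require Import all_classical all_reals all_analysis.
Set Implicit Arguments. Unset Strict Implicit. Unset Printing Implicit Defensive.
Import Order.TTheory GRing.Theory Num.Theory.
Local Open Scope classical_set_scope.
Local Open Scope ring_scope.

Definition quad_form {R : realType} (d : nat) (S : 'M[R]_d) (a : 'cV[R]_d) : R :=
  (a^T *m S *m a) 0 0.

Definition pos_def {R : realType} (d : nat) (S : 'M[R]_d) : Prop :=
  S^T = S /\ forall a : 'cV[R]_d, a != 0 -> 0 < quad_form S a.

(* X = (X_0,...,X_{d-1}), random variables on the probability space (T,P),
   is a Gaussian random vector with law N(mu, S): every coordinate is
   measurable and every nonzero linear combination a^T X is (univariate)
   normal with mean a^T mu and variance a^T S a.  (standard definition) *)
Definition gaussian_vector {R : realType} (d : nat)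
    (dT : measure_display) (T : measurableType dT) (P : probability T R)
    (X : 'I_d -> T -> R) (mu : 'cV[R]_d) (S : 'M[R]_d) : Prop :=
  (forall i, measurable_fun [set: T] (X i)) /\
  forall a : 'cV[R]_d, a != 0 ->
    forall A : set R, measurable A ->
      P ((fun t => \sum_(j < d) a j 0 * X j t) @^-1` A) =
      normal_prob (\sum_(j < d) a j 0 * mu j 0) (Num.sqrt (quad_form S a)) A.

Definition prob_box {R : realType} (d : nat)
    (dT : measure_display) (T : measurableType dT) (P : probability T R)
    (X : 'I_d -> T -> R) (i : 'I_d) : R :=
  fine (P (X i @^-1` `[-1, 1])).

From HB Require Import structures.
From mathcomp Require Import all_boot all_order all_algebra.
From mathcomp Require Import all_classical all_reals all_analysis.
From mathcomp Require Import ring lra.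
Import Order.TTheory GRing.Theory Num.Theory.
Import numFieldTopology.Exports numFieldNormedType.Exports.
Local Open Scope classical_set_scope.
Local Open Scope ring_scope.

(* The i-th coordinate of a Gaussian vector with law N(m, S) is N(m_i, s^2) with
   s^2 = S_ii <= Q, so by symmetry of the centred density phi each probability
   in the statement is the phi-mass of a window of length 2: [0, 2] for mustar
   and [a - 1, a + 1] for mu, where a = |mu_i|.  Cutting and reflecting, the
   difference of these masses is, up to sign, the integral of
   phi x - phi (x + d) over [0, w], with (w, d) = (1 - a, 1 + a) if a < 1 and
   (w, d) = (2, a - 1) otherwise.  For x >= 0 this integrand is at least
   phi x * (1 - exp (- d^2 / 2 s^2)), and phi >= exp (-1/2) / (3 s) on [0, s];
   together these give the bound with c = 1/24, and even with Q^2 in place of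
   Q^4. *)

Section Rintegral_continuous_itv.
Context {R : realType}.
Notation mu := (@lebesgue_measure R).

Lemma Rintegral_cst_itv_cc (k u v : R) : u <= v ->
  \int[mu]_(x in `[u, v]) k = k * (v - u).
Proof.
move=> uv; rewrite Rintegral_cst // [X in fine X](lebesgue_measure_itv `[u, v]) /= lte_fin.
case: ltP => [//|vu]; have -> : v = u by apply/le_anti; rewrite uv vu.
by rewrite subrr mulr0.
Qed.

Lemma continuous_integrable_itv (f : R -> R) (u v : R) : continuous f ->
  mu.-integrable `[u, v] (EFin \o f).
Proof.
move=> cf; apply: continuous_compact_integrable; first exact: segment_compact.
exact: continuous_subspaceT.
Qed.

Lemma RintegralB_itv_cc (f g : R -> R) (u v : R) : continuous f -> continuous g ->
  \int[mu]_(x in `[u, v]) (f x - g x) =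
  \int[mu]_(x in `[u, v]) f x - \int[mu]_(x in `[u, v]) g x.
Proof.
by move=> cf cg; rewrite RintegralB //; exact: continuous_integrable_itv.
Qed.

Context {f : R -> R}.
Hypothesis cf : continuous f.

Lemma Rintegral_itv_cc_split (u v w : R) : u <= v -> v <= w ->
  \int[mu]_(x in `[u, w]) f x =
  \int[mu]_(x in `[u, v]) f x + \int[mu]_(x in `[v, w]) f x.
Proof.
move=> uv vw.
have := @Rintegral_itvB R f (BLeft u) (BRight w) v (continuous_integrable_itv _ u w cf).
rewrite !bnd_simp => /(_ uv vw) uvw.
rewrite -(@Rintegral_itv_obnd_cbnd R v (BRight w)); first by rewrite -uvw addrC subrK.
apply: integrableS (continuous_integrable_itv _ v w cf) => //.
by apply: subset_itvr; rewrite bnd_simp.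
Qed.

Lemma Rintegral_itv_cc_shift (c u v : R) : u <= v ->
  \int[mu]_(x in `[u + c, v + c]) f x = \int[mu]_(x in `[u, v]) f (x + c).
Proof.
move=> uv; have shift' : (shift c : R -> R)^`()%classic = cst 1.
  by apply/funext => x; rewrite derive1E deriveD // derive_id derive_cst addr0.
have cshift : continuous (shift c : R -> R).
  by move=> x; apply: continuousD => //; exact: cvg_cst.
rewrite /Rintegral.
have := @integration_by_substitution_increasing R (shift c) f u v uv.
rewrite /= => ->.
- by congr fine; apply: eq_integral => x _ /=; rewrite shift' /= mulr1.
- by move=> x y _ _ xy; rewrite /shift ltrD2r.
- by rewrite shift' => ? _; exact: cvg_cst.
- by rewrite shift'; exact: is_cvg_cst.
- by rewrite shift'; exact: is_cvg_cst.
- split; first by move=> x _; apply: derivableD => //; exact: derivable_id.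
  + by apply: cvg_at_right_filter; apply: cshift.
  + by apply: cvg_at_left_filter; apply: cshift.
- exact: continuous_subspaceT.
Qed.

Lemma Rintegral_itv_cc_opp (u v : R) : u <= v ->
  \int[mu]_(x in `[- v, - u]) f x = \int[mu]_(x in `[u, v]) f (- x).
Proof.
move=> uv; rewrite /Rintegral integration_by_substitution_oppr //.
exact: continuous_subspaceT.
Qed.

End Rintegral_continuous_itv.

Section numeric_bounds.
Context {R : realType}.

Lemma normal_peak_ge (s : R) : 0 < s -> (3 * s)^-1 <= normal_peak s.
Proof.
move=> s0; rewrite /normal_peak lef_pV2 ?posrE ?mulr_gt0 //; last first.
  by rewrite sqrtr_gt0 pmulrn_rgt0 // mulr_gt0 ?exprn_gt0 ?pi_gt0.
rewrite -[leRHS]ger0_norm ?mulr_ge0 ?ltW // -sqrtr_sqr ltr_sqrt ?exprn_gt0 ?mulr_gt0 //.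
have := pihalf_lt2 R; have := pi_gt0 R => pi_gt0 pihalf_lt2.
rewrite mulr2n exprMn; nra.
Qed.

Lemma half_le_1BexpRN (u y : R) : 0 <= u <= 1 -> u <= y -> u / 2 <= 1 - expR (- y).
Proof.
case/andP=> u0 u1 uy.
have : expR (- y) * (1 + u) <= 1.
  rewrite -ler_pdivlMr ?mul1r; last lra.
  apply: le_trans (_ : expR (- u) <= _); first by rewrite ler_expR lerN2.
  by rewrite expRN lef_pV2 ?posrE ?expR_gt0 ?expR_ge1Dx //; lra.
have := expR_gt0 (- y); nra.
Qed.

End numeric_bounds.

Section centered_normal_density.
Context {R : realType}.
Notation mu := (@lebesgue_measure R).
Context {s : R}.
Hypothesis s_gt0 : 0 < s.
Local Notation phi := (normal_pdf 0 s).

Let s_neq0 : s != 0. Proof. by rewrite gt_eqF. Qed.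

Let twice_var_gt0 : 0 < s ^+ 2 *+ 2. Proof. by rewrite pmulrn_rgt0 // exprn_gt0. Qed.

Let continuous_phi : continuous phi. Proof. exact: continuous_normal_pdf. Qed.

Let continuous_phi_shift (c : R) : continuous (fun x => phi (x + c)).
Proof.
move=> x; apply: (@continuous_comp _ _ _ (fun y => y + c) phi).
  by apply: continuousD => //; exact: cvg_cst.
exact: continuous_phi.
Qed.

Lemma normal_pdf0E x : phi x = normal_peak s * expR (- x ^+ 2 / (s ^+ 2 *+ 2)).
Proof. by rewrite normal_pdfE // /normal_fun subr0. Qed.

Lemma normal_pdf_center m x : normal_pdf m s x = phi (x - m).
Proof. by rewrite !normal_pdfE // /normal_fun subr0. Qed.

Lemma normal_pdf0N x : phi (- x) = phi x.
Proof. by rewrite !normal_pdf0E sqrrN. Qed.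

Lemma normal_pdf0_ge_within_sd x : 0 <= x <= s -> normal_peak s * expR (- 2^-1) <= phi x.
Proof.
case/andP=> x0 xs; rewrite normal_pdf0E ler_wpM2l ?normal_peak_ge0 //.
rewrite ler_expR mulNr lerN2 ler_pdivrMr //.
have : x ^+ 2 <= s ^+ 2 by rewrite ler_sqr ?nnegrE // ltW.
lra.
Qed.

(* phi (x + d) = phi x * exp (- (2 x d + d^2) / (2 s^2)) *)
Lemma normal_pdf0_drop x d : 0 <= x -> 0 <= d ->
  phi x * (1 - expR (- d ^+ 2 / (s ^+ 2 *+ 2))) <= phi x - phi (x + d).
Proof.
move=> x0 d0; rewrite mulrBr mulr1 lerD2l lerN2 !normal_pdf0E -mulrA -expRD.
rewrite ler_wpM2l ?normal_peak_ge0 // ler_expR !mulNr -opprD lerN2 -mulrDl.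
rewrite ler_pM2r ?invr_gt0 // sqrrD lerD2r -[leLHS]addr0 lerD2l.
by rewrite mulrn_wge0 // mulr_ge0.
Qed.

Lemma Rintegral_normal_pdf0_opp u v : u <= v ->
  \int[mu]_(x in `[- v, - u]) phi x = \int[mu]_(x in `[u, v]) phi x.
Proof.
move=> uv; rewrite (Rintegral_itv_cc_opp continuous_phi) //.
by apply: eq_Rintegral => x _; rewrite normal_pdf0N.
Qed.

Lemma Rintegral_normal_pdf0_drop_ge w t d : 0 <= t <= w -> t <= s -> 0 <= d ->
  t * (normal_peak s * expR (- 2^-1) * (1 - expR (- d ^+ 2 / (s ^+ 2 *+ 2))))
  <= \int[mu]_(x in `[0, w]) (phi x - phi (x + d)).
Proof.
case/andP=> t0 tw ts d0.
have E0 : 0 <= 1 - expR (- d ^+ 2 / (s ^+ 2 *+ 2)).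
  by rewrite subr_ge0 expR_le1 mulNr oppr_le0 divr_ge0 ?sqr_ge0 ?ltW.
have drop_ge0 x : 0 <= x -> 0 <= phi x - phi (x + d).
  move=> x0; apply: le_trans (normal_pdf0_drop x d x0 d0).
  by rewrite mulr_ge0 ?normal_pdf_ge0.
have cdrop : continuous (fun x => phi x - phi (x + d)).
  move=> x; apply: continuousD; first exact: continuous_phi.
  by apply: continuousN; exact: continuous_phi_shift.
rewrite (Rintegral_itv_cc_split cdrop 0 t w t0 tw) -[leLHS]addr0 lerD //; last first.
  apply: Rintegral_ge0 => x /=; rewrite in_itv /= => /andP[tx _].
  exact: drop_ge0 (le_trans t0 tx).
rewrite [leLHS](_ : _ = \int[mu]_(x in `[0, t]) (normal_peak s * expR (- 2^-1) *
    (1 - expR (- d ^+ 2 / (s ^+ 2 *+ 2))))); last by rewrite Rintegral_cst_itv_cc // subr0 mulrC.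
apply: le_Rintegral => //.
- by apply: continuous_integrable_itv => ?; exact: cvg_cst.
- exact: continuous_integrable_itv.
move=> x /=; rewrite in_itv /= => /andP[x0 xt].
apply: le_trans (normal_pdf0_drop x d x0 d0); rewrite ler_wpM2r //.
by apply: normal_pdf0_ge_within_sd; rewrite x0 (le_trans xt).
Qed.

Lemma min_mul_normal_peak_ge Q w : s ^+ 2 <= Q -> 1 <= Q -> 0 < w ->
  Num.min w 1 / (3 * Q) <= Num.min w s * normal_peak s.
Proof.
move=> sQ Q1 w0; have Q0 : 0 < Q by lra.
have t0 : 0 <= Num.min w s by rewrite le_min !ltW.
apply: le_trans _ (ler_wpM2l t0 (normal_peak_ge _ s_gt0)).
have : Num.min w 1 * s <= Num.min w s * Q.
  have s_le_Q : s <= Q by nra.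
  have [ws|sw] := leP w s; have [w1|w1] := leP w 1.
  - by rewrite ler_pM2l.
  - nra.
  - by rewrite mulrC ler_pM2l //; lra.
  - by rewrite mul1r ler_peMr // ltW.
rewrite ler_pdivrMr ?mulr_gt0 // => key.
have -> : Num.min w s / (3 * s) * (3 * Q) = Num.min w s * Q / s by field.
by rewrite ler_pdivlMr.
Qed.

Lemma Rintegral_normal_pdf0_drop_ge_min Q w d : s ^+ 2 <= Q -> 1 <= Q -> 0 < w -> 0 <= d ->
  Num.min w 1 * Num.min 1 (d ^+ 2) / (24 * Q ^+ 2)
  <= \int[mu]_(x in `[0, w]) (phi x - phi (x + d)).
Proof.
move=> sQ Q1 w0 d0; have Q0 : 0 < Q by lra.
set k := Num.min 1 (d ^+ 2).
have k0 : 0 <= k by rewrite le_min ler01 sqr_ge0.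
have k1 : k <= 1 by rewrite ge_min lexx.
have kd : k <= d ^+ 2 by rewrite ge_min lexx orbT.
have t0 : 0 <= Num.min w s by rewrite le_min !ltW.
have := @Rintegral_normal_pdf0_drop_ge w (Num.min w s) d.
rewrite t0 ge_min lexx ge_min lexx orbT => /(_ isT isT d0); apply: le_trans.
have expR_ge : 2^-1 <= expR (- 2^-1 : R) by apply: le_trans (expR_ge1Dx _); lra.
have E_ge : k / (2 * Q) / 2 <= 1 - expR (- d ^+ 2 / (s ^+ 2 *+ 2)).
  rewrite mulNr; apply: half_le_1BexpRN.
  - rewrite divr_ge0 ?mulr_ge0 ?(ltW Q0) //= ler_pdivrMr ?mulr_gt0 //; lra.
  - rewrite ler_pdivrMr ?mulr_gt0 // mulrAC ler_pdivlMr //.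
    have : k * s ^+ 2 <= d ^+ 2 * Q by rewrite ler_pM ?sqr_ge0.
    lra.
have m0 : 0 <= Num.min w 1 by rewrite le_min (ltW w0) ler01.
rewrite [leLHS](_ : _ = Num.min w 1 / (3 * Q) * 2^-1 * (k / (2 * Q) / 2)); last first.
  by field; rewrite gt_eqF.
rewrite [leRHS]mulrA [_ * (_ * expR _)]mulrA; apply: ler_pM => //.
- by rewrite !divr_ge0 // mulr_ge0 // ltW.
- by rewrite !divr_ge0 // mulr_ge0 // ltW.
- apply: ler_pM => //; last exact: min_mul_normal_peak_ge.
  by rewrite !divr_ge0 // mulr_ge0 // ltW.
Qed.

Lemma normal_mass_gap_lt1 a : 0 <= a <= 1 ->
  \int[mu]_(x in `[0, 2]) phi x - \int[mu]_(x in `[a - 1, a + 1]) phi x =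
  - \int[mu]_(x in `[0, 1 - a]) (phi x - phi (x + (a + 1))).
Proof.
case/andP=> a0 a1.
rewrite (Rintegral_itv_cc_split continuous_phi (a - 1) 0 (a + 1)); [|lra|lra].
rewrite (Rintegral_itv_cc_split continuous_phi 0 (a + 1) 2); [|lra|lra].
rewrite -[in `[a - 1, 0]]oppr0 -[a - 1]opprB Rintegral_normal_pdf0_opp; last lra.
rewrite -[in `[a + 1, 2]](add0r (a + 1)) (_ : 2 = 1 - a + (a + 1)); last ring.
rewrite (Rintegral_itv_cc_shift continuous_phi); last lra.
by rewrite RintegralB_itv_cc //; ring.
Qed.

Lemma normal_mass_gap_ge1 a : 1 <= a ->
  \int[mu]_(x in `[0, 2]) phi x - \int[mu]_(x in `[a - 1, a + 1]) phi x =
  \int[mu]_(x in `[0, 2]) (phi x - phi (x + (a - 1))).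
Proof.
move=> a1; rewrite RintegralB_itv_cc // -(Rintegral_itv_cc_shift continuous_phi) //.
by rewrite add0r (_ : 2 + (a - 1) = a + 1) //; ring.
Qed.

Lemma normal_mass_gap_lb Q a : s ^+ 2 <= Q -> 1 <= Q -> 0 <= a ->
  Num.min 1 ((1 - a) ^+ 2) / (24 * Q ^+ 2) <=
  `|\int[mu]_(x in `[0, 2]) phi x - \int[mu]_(x in `[a - 1, a + 1]) phi x|.
Proof.
move=> sQ Q1 a0; have Q0 : 0 < Q by lra.
have [a1|a1] := ltP a 1.
- rewrite normal_mass_gap_lt1 ?a0 ?(ltW a1) // normrN; apply: le_trans _ (ler_norm _).
  have w0 : 0 < 1 - a by lra.
  have d0 : 0 <= a + 1 by lra.
  apply: le_trans _ (Rintegral_normal_pdf0_drop_ge_min Q (1 - a) (a + 1) sQ Q1 w0 d0).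
  have -> : Num.min (1 - a) 1 = 1 - a by rewrite min_l //; lra.
  have -> : Num.min 1 ((a + 1) ^+ 2) = 1 by rewrite min_l //; nra.
  rewrite mulr1 ler_pM2r ?invr_gt0 ?mulr_gt0 ?exprn_gt0 //.
  by rewrite ge_min; apply/orP; right; nra.
- rewrite normal_mass_gap_ge1 //; apply: le_trans _ (ler_norm _).
  have d0 : 0 <= a - 1 by lra.
  apply: le_trans _ (Rintegral_normal_pdf0_drop_ge_min Q 2 (a - 1) sQ Q1 _ d0) => //.
  have -> : Num.min 2 1 = 1 :> R by rewrite min_r //; lra.
  by rewrite mul1r -[a - 1]opprB sqrrN.
Qed.

Lemma normal_prob_box m :
  fine (normal_prob m s `[-1, 1]) = \int[mu]_(x in `[`|m| - 1, `|m| + 1]) phi x.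
Proof.
transitivity (\int[mu]_(x in `[-1, 1]) phi (x + - m)).
  by congr fine; apply: eq_integral => x _; rewrite normal_pdf_center.
rewrite -(Rintegral_itv_cc_shift continuous_phi); last lra.
have [m0|m0] := leP 0 m.
- have -> : -1 - m = - (m + 1) by ring.
  have -> : 1 - m = - (m - 1) by ring.
  by rewrite ger0_norm // Rintegral_normal_pdf0_opp //; lra.
- by rewrite ltr0_norm // (addrC (-1)) (addrC 1).
Qed.

End centered_normal_density.

Lemma delta_mx_neq0 {R : nzRingType} {m n : nat} (i : 'I_m) (j : 'I_n) :
  delta_mx i j != 0 :> 'M[R]_(m, n).
Proof.
apply/negP => /eqP /matrixP /(_ i j); rewrite !mxE !eqxx /= => /eqP.
by rewrite oner_eq0.
Qed.

Section gaussian_vector_coordinates.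
Context {R : realType} {d : nat}.

Lemma quad_form_delta (S : 'M[R]_d) i : quad_form S (delta_mx i 0) = S i i.
Proof. by rewrite /quad_form trmx_delta -rowE -colE !mxE. Qed.

Lemma pos_def_diag_gt0 (S : 'M[R]_d) i : pos_def S -> 0 < S i i.
Proof.
by case=> _ S_pos; rewrite -quad_form_delta S_pos ?delta_mx_neq0.
Qed.

Lemma sum_delta_mx_mul i (f : 'I_d -> R) :
  \sum_(j < d) (delta_mx i 0 : 'cV[R]_d) j 0 * f j = f i.
Proof.
rewrite (bigD1 i) //= big1 ?addr0; first by rewrite mxE !eqxx mul1r.
by move=> j ji; rewrite mxE (negbTE ji) mul0r.
Qed.

Lemma gaussian_vector_coord {dT : measure_display} {T : measurableType dT}
    {P : probability T R} {X : 'I_d -> T -> R} {m : 'cV[R]_d} {S : 'M[R]_d} :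
  gaussian_vector P X m S -> forall i (A : set R), measurable A ->
  P (X i @^-1` A) = normal_prob (m i 0) (Num.sqrt (S i i)) A.
Proof.
case=> _ gX i A mA; have := gX _ (delta_mx_neq0 i 0) A mA.
have -> : (fun t => \sum_(j < d) (delta_mx i 0 : 'cV[R]_d) j 0 * X j t) = X i.
  by apply/funext => t; rewrite sum_delta_mx_mul.
by rewrite sum_delta_mx_mul quad_form_delta.
Qed.

End gaussian_vector_coordinates.

Theorem lemma5 (R : realType) :
  exists c : R, 0 < c /\ c <= 1 /\
  forall (d : nat) (S : 'M[R]_d) (mustar mu : 'cV[R]_d) (Q : R)
    (dT1 : measure_display) (T1 : measurableType dT1) (P1 : probability T1 R)
    (X1 : 'I_d -> T1 -> R)
    (dT2 : measure_display) (T2 : measurableType dT2) (P2 : probability T2 R)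
    (X2 : 'I_d -> T2 -> R),
  1 <= Q ->
  pos_def S ->
  gaussian_vector P1 X1 mustar S ->
  gaussian_vector P2 X2 mu S ->
  (forall i : 'I_d, S i i <= Q) ->
  (forall i : 'I_d, `|mustar i 0| = 1) ->
  forall i : 'I_d,
    c * Num.min 1 ((1 - `|mu i 0|) ^+ 2) / Q ^+ 4
      <= `|prob_box P1 X1 i - prob_box P2 X2 i|.
Proof.
exists 24^-1; split; first by rewrite invr_gt0.
split; first by rewrite invf_le1 // ler1n.
move=> d S mustar mu Q dT1 T1 P1 X1 dT2 T2 P2 X2 Q1 pS g1 g2 SQ ms i.
have s_gt0 : 0 < Num.sqrt (S i i) by rewrite sqrtr_gt0 pos_def_diag_gt0.
have sQ : Num.sqrt (S i i) ^+ 2 <= Q by rewrite sqr_sqrtr ?SQ // ltW // -sqrtr_gt0.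
rewrite /prob_box (gaussian_vector_coord g1) ?(gaussian_vector_coord g2) //.
rewrite !(normal_prob_box s_gt0) ms subrr (_ : 1 + 1 = 2) //.
apply: le_trans _ (normal_mass_gap_lb s_gt0 _ _ sQ Q1 (normr_ge0 _)).
have Q0 : 0 < Q by lra.
rewrite [leRHS](_ : _ = 24^-1 * Num.min 1 ((1 - `|mu i 0|) ^+ 2) / Q ^+ 2); last first.
  by field; rewrite gt_eqF.
rewrite ler_wpM2l ?mulr_ge0 ?le_min ?ler01 ?sqr_ge0 // lef_pV2 ?posrE ?exprn_gt0 //.
exact: ler_weXn2l.
Qed.
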